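(* Let $(J,\preccurlyeq)$ be a finite upper semilattice and $F\subseteq K_J$ a subfunctor of the constant functor. Then \[ \bigcup_{d\geq0}\mathrm{supp}(\beta^dF)\subseteq\langle\mathrm{supp}(\beta^0F)\rangle. \]
   Context: $K$ is a field and $\mathrm{vect}_K$ the category of finite-dimensional $K$-vector spaces; $K_J\colon J\to\mathrm{vect}_K$ is the constant functor with value $K$ and identity transition maps. For $a\in J$, $K(a,-)$ is the functor with $K(a,b)=K$ if $a\preccurlyeq b$ and $0$ otherwise, identity transition maps between nonzero values. Every functor $F\colon J\to\mathrm{vect}_K$ has a minimal projective resolution, unique up to isomorphism, whose $d$-th term is $\bigoplus_{a\in J}K(a,-)^{\beta^dF(a)}$; $\beta^dF\colon J\to\mathbb N$ is the $d$-th Betti diagram and $\mathrm{supp}(\beta^dF)=\{a\mid\beta^dF(a)\neq0\}$. An upper semilattice is a poset in which every nonempty subset has a join; for $S\subseteq J$, $\langle S\rangle:=\{\bigvee T\mid T\neq\varnothing,\ T\subseteq S\}$. *)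

From HB Require Import structures.
From mathcomp Require Import all_boot all_order all_algebra.
Set Implicit Arguments. Unset Strict Implicit. Unset Printing Implicit Defensive.
Import Order.Theory GRing.Theory.
Local Open Scope ring_scope.

(* A finite-dimensional vector
   space is K^n (row vectors); the transition map F(a <= b) is the matrix
   fmap a b acting on the right (v |-> v *m fmap a b).  For incomparable a b,
   fmap a b is irrelevant junk. *)
Record functor (K : fieldType) (d : Order.disp_t) (J : porderType d) := Functor {
  fdim : J -> nat;
  fmap : forall a b : J, 'M[K]_(fdim a, fdim b);
  fmap_id : forall a, fmap a a = 1%:M;
  fmap_comp : forall a b c, (a <= b)%O -> (b <= c)%O ->
     fmap a c = fmap a b *m fmap b c
}.

Record nat_trans (K : fieldType) (d : Order.disp_t) (J : porderType d)
    (F G : functor K J) := NatTrans {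
  nt : forall a : J, 'M[K]_(fdim F a, fdim G a);
  nt_nat : forall a b, (a <= b)%O -> fmap F a b *m nt b = nt a *m fmap G a b
}.

Definition const_functor (K : fieldType) (d : Order.disp_t) (J : porderType d)
  : functor K J.
Proof.
refine (@Functor K d J (fun _ => 1%N) (fun _ _ => 1%:M) (fun _ => erefl) _).
by move=> a b c _ _; rewrite mul1mx.
Defined.

(* F is isomorphic to the free functor (+)_{a in J} K(a,-)^{m a}:
   there are generators g a (the m a rows of g a, elements of F(a)) such
   that for every b, the images F(a <= b)(g a) for a <= b form a basis
   of F(b) (they span F(b) and their number is dim F(b)). *)
Definition free_with (K : fieldType) (d : Order.disp_t) (J : finPOrderType d)
    (P : functor K J) (m : J -> nat) : Prop :=
  exists g : forall a : J, 'M[K]_(m a, fdim P a),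
    forall b : J,
      (\sum_(a | (a <= b)%O) m a)%N = fdim P b /\
      (1%:M <= \sum_(a | (a <= b)%O) <<g a *m fmap P a b>>)%MS.

Definition rad (K : fieldType) (d : Order.disp_t) (J : finPOrderType d)
    (P : functor K J) (a : J) : 'M[K]_(fdim P a) :=
  (\sum_(b | (b < a)%O) <<fmap P b a>>)%MS.

(* A minimal projective resolution  ... -> P 1 -> P 0 -> F -> 0  of F, with
   P d = (+)_a K(a,-)^{mult d a}.  Minimality: every differential
   P (d+1) -> P d has image inside the radical of P d (equivalently each
   P d maps onto its image / onto F as a projective cover). *)
Record min_proj_res (K : fieldType) (d : Order.disp_t) (J : finPOrderType d)
    (F : functor K J) := MinProjRes {
  res_P : nat -> functor K J;
  mult : nat -> J -> nat;
  res_free : forall n, free_with (res_P n) (mult n);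
  res_eps : nat_trans (res_P 0) F;
  res_dif : forall n, nat_trans (res_P n.+1) (res_P n);
  res_eps_surj : forall a, row_full (nt res_eps a);
  res_exact0 : forall a, (nt (res_dif 0) a == kermx (nt res_eps a))%MS;
  res_exact : forall n a,
     (nt (res_dif n.+1) a == kermx (nt (res_dif n) a))%MS;
  res_minimal : forall n a, (nt (res_dif n) a <= rad (res_P n) a)%MS
}.

(* Betti diagram beta^n F = mult n and its support. *)
Definition betti_supp (K : fieldType) (d : Order.disp_t) (J : finPOrderType d)
    (F : functor K J) (R : min_proj_res F) (n : nat) : {set J} :=
  [set a | mult R n a != 0%N].

Definition is_join (d : Order.disp_t) (J : finPOrderType d) (T : {set J}) (j : J)
  : bool :=
  [forall t in T, (t <= j)%O] &&
  [forall u, [forall t in T, (t <= u)%O] ==> (j <= u)%O].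

Definition upper_semilattice (d : Order.disp_t) (J : finPOrderType d) : Prop :=
  forall T : {set J}, T != set0 -> exists j, is_join T j.

Definition join_closure (d : Order.disp_t) (J : finPOrderType d) (S : {set J})
  : {set J} :=
  [set j | [exists T : {set J}, [&& T != set0, T \subset S & is_join T j]]].

From Pilot Require Import Defs.
From HB Require Import structures.
From mathcomp Require Import all_boot all_order all_algebra.
Set Implicit Arguments. Unset Strict Implicit. Unset Printing Implicit Defensive.
Import Order.Theory GRing.Theory.
Local Open Scope ring_scope.

(* Let S = supp(β^0 F) and a ∉ <S>.  Either no element of S lies below a, or
   j := ⋁ {s ∈ S | s ≤ a} lies in <S>, hence j < a.  A free functor generated
   in <S> has no generator below a in the first case, and the same generators
   below j as below a in the second; so it vanishes at a, resp. its transition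
   map j -> a is an isomorphism.  Now take an exact sequence P' -> P -> Q -> T,
   minimal at P, with Q free and generated in <S>, and T(j -> a) injective
   (T is F, a subfunctor of K_J, or an earlier term of the resolution).  A
   diagram chase gives P(a) = ker (P(a) -> Q(a)) + im P(j -> a), and both
   summands lie in the radical of P at a, so P has no generator at a.  Induct
   along the resolution. *)

Definition supported_in (T : finType) (m : T -> nat) (A : {set T}) : Prop :=
  forall b, m b != 0%N -> b \in A.

Section Joins.
Variables (d : Order.disp_t) (J : finPOrderType d).
Implicit Types (S T : {set J}) (a c j : J).

Lemma big_leD1 (R : Type) (idx : R) (op : Monoid.com_law idx) (F : J -> R) a :
  \big[op/idx]_(c | (c <= a)%O) F c = op (F a) (\big[op/idx]_(c | (c < a)%O) F c).
Proof.
rewrite (bigD1 a) //=; congr (op _ _); apply: eq_bigl => c.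
by rewrite lt_neqAle andbC.
Qed.

Lemma is_joinP T j :
  reflect ((forall t, t \in T -> (t <= j)%O) /\
           (forall u, (forall t, t \in T -> (t <= u)%O) -> (j <= u)%O))
          (is_join T j).
Proof.
apply: (iffP andP) => [[/forall_inP ub /forallP least] | [ub least]].
  by split=> // u ubu; apply: (implyP (least u)); apply/forall_inP.
split; first exact/forall_inP.
by apply/forallP => u; apply/implyP => /forall_inP; apply: least.
Qed.

Definition below S a : {set J} := [set s in S | (s <= a)%O].

Lemma sub_join_closure S : S \subset join_closure S.
Proof.
apply/subsetP => s sS; rewrite inE; apply/existsP; exists [set s].
rewrite sub1set sS; apply/and3P; split=> //; first by apply/set0Pn; exists s; rewrite set11.
by apply/is_joinP; split=> [t /set1P -> // | u]; apply; rewrite set11.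
Qed.

Lemma join_below_le S a j : is_join (below S a) j -> (j <= a)%O.
Proof. by case/is_joinP=> _; apply=> t; rewrite inE => /andP[]. Qed.

Lemma join_below_mem S a j :
  below S a != set0 -> is_join (below S a) j -> j \in join_closure S.
Proof.
move=> belowN0 jj; rewrite inE; apply/existsP; exists (below S a).
by rewrite belowN0 jj andbT; apply/subsetP => t; rewrite inE => /andP[].
Qed.

Lemma join_closure_below S a c : c \in join_closure S -> (c <= a)%O ->
  exists2 T, T != set0 & (T \subset below S a) && is_join T c.
Proof.
rewrite inE => /existsP[T /and3P[TN0 TS Tc]] ca; exists T => //.
rewrite Tc andbT; apply/subsetP => t tT; rewrite inE (subsetP TS) //=.
by case/is_joinP: Tc => ub _; apply: le_trans (ub t tT) ca.
Qed.

Lemma join_closure_le_join S a c j : c \in join_closure S -> (c <= a)%O ->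
  is_join (below S a) j -> (c <= j)%O.
Proof.
move=> cS ca /is_joinP[ub _].
have [T _ /andP[TS /is_joinP[_ least]]] := join_closure_below cS ca.
by apply: least => t tT; apply: ub; apply: (subsetP TS).
Qed.

Lemma join_closure_below_neq0 S a c :
  c \in join_closure S -> (c <= a)%O -> below S a != set0.
Proof.
move=> cS ca; have [T TN0 /andP[TS _]] := join_closure_below cS ca.
by apply: contraNneq TN0 => below0; rewrite -subset0 -below0.
Qed.

End Joins.

Section FreeFunctors.
Variables (K : fieldType) (d : Order.disp_t) (J : finPOrderType d).
Variables (P : functor K J) (m : J -> nat).
Hypothesis freeP : free_with P m.

Lemma free_fdim b : fdim P b = (\sum_(a | (a <= b)%O) m a)%N.
Proof. by case: freeP => g /(_ b)[]. Qed.

Lemma free_rad_rank a : (\rank (Defs.rad P a) <= \sum_(c | (c < a)%O) m c)%N.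
Proof.
case: freeP => g free_g.
have rad_gens : (Defs.rad P a <= \sum_(c | (c < a)%O) <<g c *m fmap P c a>>)%MS.
  apply/sumsmx_subP => b ba; rewrite genmxE.
  have [_ span_b] := free_g b.
  have := submxMr (fmap P b a) span_b; rewrite mul1mx => /submx_trans; apply.
  rewrite sumsmxMr_gen; apply/sumsmx_subP => c cb.
  rewrite genmxE (eqmxMr _ (genmxE _)) -mulmxA -fmap_comp ?(ltW ba) //.
  by rewrite (sumsmx_sup c) ?genmxE // (le_lt_trans cb ba).
apply: leq_trans (mxrankS rad_gens) _; apply: leq_trans (mxrank_sum_leqif _).1 _.
apply: leq_sum => c _; rewrite /= genmxE.
exact: leq_trans (mxrankM_maxl _ _) (rank_leq_row _).
Qed.

Lemma free_mult_eq0 a : (1%:M <= Defs.rad P a)%MS -> m a = 0%N.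
Proof.
move/mxrankS; rewrite mxrank1 => /leq_trans/(_ (free_rad_rank a)).
by rewrite free_fdim big_leD1 -[X in (_ <= X)%N]add0n leq_add2r leqn0 => /eqP.
Qed.

Variable S : {set J}.
Hypothesis suppP : supported_in m (join_closure S).

Lemma free_fdim_eq0 a : below S a = set0 -> fdim P a = 0%N.
Proof.
move=> below0; rewrite free_fdim big1 // => c ca.
by apply/eqP; apply: contra_eqT below0 => /suppP cS; apply: join_closure_below_neq0 cS ca.
Qed.

Lemma free_fdim_join_below a j : is_join (below S a) j -> fdim P j = fdim P a.
Proof.
move=> jj; have ja := join_below_le jj.
rewrite !free_fdim big_mkcond [RHS]big_mkcond /=; apply: eq_bigr => c _.
have [-> | /suppP cS] := eqVneq (m c) 0%N; first by rewrite !if_same.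
suff -> : (c <= j)%O = (c <= a)%O by [].
by apply/idP/idP => [cj | ca]; [apply: le_trans cj ja | apply: join_closure_le_join cS ca jj].
Qed.

Lemma free_fmap_join_below_full a j : is_join (below S a) j -> row_full (fmap P j a).
Proof.
move=> jj; have ja := join_below_le jj.
case: freeP => g /(_ a)[_ span_a]; rewrite -sub1mx.
apply: submx_trans span_a _; apply/sumsmx_subP => c ca; rewrite genmxE.
have [mc0 | /suppP cS] := eqVneq (m c) 0%N.
  by move: (g c *m fmap P c a); rewrite mc0 => M; rewrite [M]flatmx0 sub0mx.
by rewrite (fmap_comp P (join_closure_le_join cS ca jj) ja) mulmxA submxMl.
Qed.

Lemma free_fmap_join_below_free a j : is_join (below S a) j -> row_free (fmap P j a).
Proof.
move=> jj; rewrite /row_free (eqP (free_fmap_join_below_full jj)).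
by rewrite (free_fdim_join_below jj).
Qed.

End FreeFunctors.

Lemma subfunctor_fmap_free (K : fieldType) (d : Order.disp_t) (J : porderType d)
    (F G : functor K J) (iota : nat_trans F G) :
    (forall a, row_free (nt iota a)) ->
  forall a b, (a <= b)%O -> row_free (fmap G a b) -> row_free (fmap F a b).
Proof.
move=> iota_free a b ab Gfree.
rewrite /row_free -(mxrankMfree _ (iota_free b)) (nt_nat iota ab).
by rewrite mxrankMfree // (eqP (iota_free a)).
Qed.

Section MinimalExact.
Variables (K : fieldType) (d : Order.disp_t) (J : finPOrderType d).
Variables (P' P Q T : functor K J).
Variables (d' : nat_trans P' P) (dP : nat_trans P Q) (e : nat_trans Q T).
Hypothesis exact_Q : forall a, (nt dP a == kermx (nt e a))%MS.
Hypothesis exact_P : forall a, (nt d' a == kermx (nt dP a))%MS.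
Hypothesis minimal_P : forall a, (nt d' a <= Defs.rad P a)%MS.

Lemma kermx_sub_rad a : (kermx (nt dP a) <= Defs.rad P a)%MS.
Proof. by case/andP: (exact_P a) => _ ker_d'; apply: submx_trans ker_d' (minimal_P a). Qed.

Lemma sub1_kermx_adds_fmap j a : (j <= a)%O ->
  row_full (fmap Q j a) -> row_free (fmap T j a) ->
  (1%:M <= kermx (nt dP a) + fmap P j a)%MS.
Proof.
move=> ja Qfull Tfree.
have dPe0 : nt dP a *m nt e a = 0 by apply/sub_kermxP; case/andP: (exact_Q a).
have [X dPX] : exists X, nt dP a = X *m fmap Q j a.
  by apply/submxP; apply: submx_trans (submx1 _) _; rewrite sub1mx.
have Xe0 : X *m nt e j = 0.
  by apply/eqP; rewrite -(mulmx_free_eq0 _ Tfree) -mulmxA -(nt_nat e ja) mulmxA -dPX dPe0.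
have [Y XY] : exists Y, X = Y *m nt dP j.
  by apply/submxP; case/andP: (exact_Q j) => _; apply: submx_trans; apply/sub_kermxP.
rewrite -[1%:M](subrK (Y *m fmap P j a)) addmx_sub_adds ?submxMl //.
apply/sub_kermxP; rewrite mulmxBl mul1mx -mulmxA (nt_nat dP ja) mulmxA -XY -dPX.
exact: subrr.
Qed.

Lemma sub1_rad_of_fdim0 a : fdim Q a = 0%N -> (1%:M <= Defs.rad P a)%MS.
Proof.
move=> Qa0; apply: submx_trans (kermx_sub_rad a).
by move: (nt dP a); rewrite Qa0 => D; rewrite [D]thinmx0 kermx0.
Qed.

Lemma sub1_rad_of_transition j a : (j < a)%O ->
  row_full (fmap Q j a) -> row_free (fmap T j a) -> (1%:M <= Defs.rad P a)%MS.
Proof.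
move=> ja Qfull Tfree.
apply: submx_trans (sub1_kermx_adds_fmap (ltW ja) Qfull Tfree) _.
by rewrite addsmx_sub kermx_sub_rad /Defs.rad (sumsmx_sup j) ?genmxE.
Qed.

Variable S : {set J}.
Hypothesis HJ : upper_semilattice J.

Lemma supported_in_join_closure_exact m mQ :
    free_with P m -> free_with Q mQ -> supported_in mQ (join_closure S) ->
    (forall a j, is_join (below S a) j -> row_free (fmap T j a)) ->
  supported_in m (join_closure S).
Proof.
move=> freeP freeQ suppQ Tfree a; apply: contra_neqT => aS.
apply: (free_mult_eq0 freeP).
have [below0 | belowN0] := eqVneq (below S a) set0.
  exact/sub1_rad_of_fdim0/(free_fdim_eq0 freeQ suppQ).
have [j jj] := HJ belowN0.
apply: (sub1_rad_of_transition (j := j)); last exact: Tfree.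
  rewrite lt_neqAle (join_below_le jj) andbT.
  by apply: contraNneq aS => <-; apply: join_below_mem belowN0 jj.
exact: (free_fmap_join_below_full freeQ suppQ jj).
Qed.

End MinimalExact.

Local Close Scope ring_scope.

Theorem corollary4p9 (K : fieldType) (d : Order.disp_t) (J : finPOrderType d)
    (HJ : upper_semilattice J)
    (F : functor K J) (iota : nat_trans F (const_functor K J))
    (Hsub : forall a, row_free (nt iota a))
    (R : min_proj_res F) :
  forall n : nat, betti_supp R n \subset join_closure (betti_supp R 0).
Proof.
set S := betti_supp R 0.
have supp0 : supported_in (mult R 0) (join_closure S).
  by move=> b b0; apply: (subsetP (sub_join_closure S)); rewrite inE.
have F_free a j : is_join (below S a) j -> row_free (fmap F j a).
  move=> jj; apply: (subfunctor_fmap_free Hsub (join_below_le jj)).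
  by rewrite /row_free mxrank1.
have supp n : supported_in (mult R n) (join_closure S) /\
              supported_in (mult R n.+1) (join_closure S).
  elim: n => [|n [suppn suppSn]].
    split=> //; apply: (supported_in_join_closure_exact (res_exact0 R) (res_exact R 0)
      (res_minimal R 1) HJ (res_free R 1) (res_free R 0) supp0 F_free).
  split=> //; apply: (supported_in_join_closure_exact (res_exact R n) (res_exact R n.+1)
    (res_minimal R n.+2) HJ (res_free R n.+2) (res_free R n.+1) suppSn).
  exact: (free_fmap_join_below_free (res_free R n) suppn).
by move=> n; apply/subsetP => b; rewrite inE; apply: (supp n).1.
Qed.
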